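(* For every sufficiently small $\eta>0$ there exists $r>0$ such that, whenever $z_0\in\mathbb C$ satisfies $r/2<|z_0|<r$, the following hold. (a) For distinct pairs $(I,n),(I',n')\in\mathcal I$, the circles $\mathrm{im}(\gamma_{I,n})$ and $\mathrm{im}(\gamma_{I',n'})$ are disjoint. (b) For every $(I,n)\in\mathcal I$: - $a_i(z_0)\in B_{I,n}$ for all $i\in I$, and - $a_j(z_0)\notin B_{I,n}\cup\mathrm{im}(\gamma_{I,n})$ for all $j\notin I$.
   Context: Let $d\ge2$ and let $a_1,\dots,a_d\in\mathbb C[[x]]$ be distinct power series with positive radii of convergence. Let $e_{i,j}=v_x(a_i-a_j)$ be the $x$-adic valuation. Let $\mathcal I$ be the set of pairs $(I,n)$ such that: - $I\subseteq\{1,\dots,d\}$ has at least two elements, - $n\ge1$ is an integer, - $e_{i,j}\ge n$ for all distinct $i,j\in I$, and - $I$ is maximal among subsets with this property. For $n\ge1$ let $F_n:\mathbb C[[x]]\to\mathbb C[x]$ be the truncation $\sum_k c_kx^k\mapsto\sum_{k=0}^{n-1}c_kx^k$. For $(I,n)\in\mathcal I$ let $b_{I,n}$ be the common value of $F_n(a_i)$ for $i\in I$. Given $z_0$ and $\eta,r>0$, define: - $w_{I,n}=b_{I,n}(z_0)$; - the loop $\gamma_{I,n}(t)=w_{I,n}+r^{n-1}\eta e^{2\pi\sqrt{-1}t}$ for $t\in[0,1]$, with image the circle $\mathrm{im}(\gamma_{I,n})$; - the open disk $B_{I,n}=\{z\in\mathbb C: |z-w_{I,n}|<r^{n-1}\eta\}$.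 *)

From Stdlib Require Import Reals Lra ClassicalEpsilon.
Open Scope R_scope.

Definition Cplx : Type := (R * R)%type.
Definition C0 : Cplx := (0, 0).
Definition C1 : Cplx := (1, 0).
Definition Cadd (z w : Cplx) : Cplx := (fst z + fst w, snd z + snd w).
Definition Csub (z w : Cplx) : Cplx := (fst z - fst w, snd z - snd w).
Definition Cmul (z w : Cplx) : Cplx :=
  (fst z * fst w - snd z * snd w, fst z * snd w + snd z * fst w).
Fixpoint Cpow (z : Cplx) (k : nat) : Cplx :=
  match k with O => C1 | S k' => Cmul z (Cpow z k') end.
Definition Cnorm (z : Cplx) : R := sqrt (fst z * fst z + snd z * snd z).

(** Formal power series in Cplx[[x]]: coefficient sequences. *)
Definition pseries : Type := nat -> Cplx.

Fixpoint Csum (u : nat -> Cplx) (N : nat) : Cplx :=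
  match N with O => C0 | S N' => Cadd (Csum u N') (u N') end.

Definition Csums (u : nat -> Cplx) (l : Cplx) : Prop :=
  Un_cv (fun N => fst (Csum u N)) (fst l) /\ Un_cv (fun N => snd (Csum u N)) (snd l).

Definition ps_terms (f : pseries) (z : Cplx) : nat -> Cplx := fun k => Cmul (f k) (Cpow z k).

Definition pos_radius (f : pseries) : Prop :=
  exists rho, 0 < rho /\ forall z, Cnorm z < rho -> exists l, Csums (ps_terms f z) l.

(** Value f(z) of the power series at z (the sum of the series, when it converges). *)
Definition ps_eval (f : pseries) (z : Cplx) : Cplx :=
  epsilon (inhabits C0) (fun l => Csums (ps_terms f z) l).

(** v_x(f - g) >= n, i.e. all coefficients of f - g of degree < n vanish
    (v_x(h) = min {k | h_k <> 0}). *)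
Definition val_diff_ge (f g : pseries) (n : nat) : Prop :=
  forall k, (k < n)%nat -> Csub (f k) (g k) = C0.

(** Value at z of the truncation F_n(f) = sum_{k<n} c_k x^k. *)
Definition trunc_eval (f : pseries) (n : nat) (z : Cplx) : Cplx := Csum (ps_terms f z) n.

(** Indices are 0..d-1 (instead of 1..d); a subset I of {0..d-1} is a predicate. *)
Definition pairwise_close (d : nat) (a : nat -> pseries) (J : nat -> Prop) (n : nat) : Prop :=
  forall i j, J i -> J j -> i <> j -> val_diff_ge (a i) (a j) n.

Definition in_calI (d : nat) (a : nat -> pseries) (I : nat -> Prop) (n : nat) : Prop :=
  (forall i, I i -> (i < d)%nat) /\
  (exists i j, I i /\ I j /\ i <> j) /\
  (1 <= n)%nat /\
  pairwise_close d a I n /\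
  (forall J : nat -> Prop,
      (forall i, J i -> (i < d)%nat) ->
      (exists i j, J i /\ J j /\ i <> j) ->
      pairwise_close d a J n ->
      (forall i, I i -> J i) ->
      forall i, J i -> I i).

Definition same_pair (I : nat -> Prop) (n : nat) (I' : nat -> Prop) (n' : nat) : Prop :=
  n = n' /\ forall i, I i <-> I' i.

From Stdlib Require Import Reals Lra Lia List Classical ClassicalEpsilon.
From Coquelicot Require Complex.
Open Scope R_scope.

(* Fix M beyond the first index at which any two of the series differ.  Near 0, a_i(z0) and every
   truncation F_N(a_i)(z0), p <= N <= M, lie within E |z0|^p of F_p(a_i)(z0), whereas truncations
   of two series whose first difference is in degree m are at least delta |z0|^m apart.  For the
   circles of (I, n) and (I', n') with n <= n': if a_i and a_i' differ below degree n, the centres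
   are further apart than the sum of the radii; otherwise n < n' (maximality forces I = I' when
   n = n') and the smaller circle lies inside B_{I,n}, since radii shrink by the factor r from one
   level to the next.  As I is a full agreement class modulo x^n, the same estimates put a_j(z0)
   inside B_{I,n} exactly when j is in I. *)

Lemma Cnorm_Cmod z : Cnorm z = Complex.Cmod z.
Proof. unfold Cnorm, Complex.Cmod; f_equal; ring. Qed.

Lemma Cnorm_ge0 z : 0 <= Cnorm z.
Proof. apply sqrt_pos. Qed.

Lemma Cnorm_mul z w : Cnorm (Cmul z w) = Cnorm z * Cnorm w.
Proof. rewrite !Cnorm_Cmod; exact (Complex.Cmod_mult z w). Qed.

Lemma Cnorm_pow z k : Cnorm (Cpow z k) = Cnorm z ^ k.
Proof.
  induction k as [|k IH]; simpl.
  - rewrite Cnorm_Cmod; exact Complex.Cmod_1.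
  - rewrite Cnorm_mul, IH; ring.
Qed.

Lemma Cnorm_add_le z w : Cnorm (Cadd z w) <= Cnorm z + Cnorm w.
Proof. rewrite !Cnorm_Cmod; exact (Complex.Cmod_triangle z w). Qed.

Lemma Cnorm_real x : Cnorm (x, 0) = Rabs x.
Proof. rewrite Cnorm_Cmod; exact (Complex.Cmod_R x). Qed.

Lemma Cnorm_le_re_im z : Cnorm z <= Rabs (fst z) + Rabs (snd z).
Proof.
  assert (Hz : z = Cadd (fst z, 0) (Cmul (0, 1) (snd z, 0)))
    by (destruct z; unfold Cadd, Cmul; simpl; f_equal; ring).
  rewrite Hz at 1.
  eapply Rle_trans; [apply Cnorm_add_le|].
  rewrite Cnorm_mul, !Cnorm_real.
  replace (Cnorm (0, 1)) with 1 by (rewrite Cnorm_Cmod; symmetry; exact Complex.Cmod_Ci).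
  lra.
Qed.

Lemma Rabs_fst_le_Cnorm z : Rabs (fst z) <= Cnorm z.
Proof. rewrite Cnorm_Cmod; apply (Rle_trans _ _ _ (Rmax_l _ _) (Complex.Rmax_Cmod z)). Qed.

Lemma Rabs_snd_le_Cnorm z : Rabs (snd z) <= Cnorm z.
Proof. rewrite Cnorm_Cmod; apply (Rle_trans _ _ _ (Rmax_r _ _) (Complex.Rmax_Cmod z)). Qed.

Lemma Csub_eq_C0 x y : Csub x y = C0 <-> x = y.
Proof.
  destruct x as [x1 x2], y as [y1 y2]; unfold Csub, C0; simpl; split.
  - intros H; injection H; intros; f_equal; lra.
  - intros H; injection H; intros -> ->; f_equal; ring.
Qed.

Lemma Cnorm_sub_triangle x y z : Cnorm (Csub x z) <= Cnorm (Csub x y) + Cnorm (Csub y z).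
Proof.
  replace (Csub x z) with (Cadd (Csub x y) (Csub y z))
    by (unfold Cadd, Csub; simpl; f_equal; ring).
  apply Cnorm_add_le.
Qed.

Lemma Cnorm_sub_sym x y : Cnorm (Csub x y) = Cnorm (Csub y x).
Proof. unfold Cnorm, Csub; simpl; f_equal; ring. Qed.

Lemma Cnorm_sub_diag x : Cnorm (Csub x x) = 0.
Proof. unfold Cnorm, Csub; simpl; rewrite <- sqrt_0; f_equal; ring. Qed.

Lemma Cnorm_sub_gt0 x y : x <> y -> 0 < Cnorm (Csub x y).
Proof.
  intros Hxy; rewrite Cnorm_Cmod; apply Complex.Cmod_gt_0.
  intros H; apply Hxy, Csub_eq_C0; exact H.
Qed.

Lemma finite_join_witness {I T : Type} (join : T -> T -> T) (x0 : T)
    (P : T -> Prop) (Q : I -> T -> Prop) :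
  P x0 -> (forall x y, P x -> P y -> P (join x y)) ->
  (forall i x y, Q i x -> Q i (join x y)) ->
  (forall i x y, Q i y -> Q i (join x y)) ->
  forall l, (forall i, In i l -> exists x, P x /\ Q i x) ->
  exists x, P x /\ forall i, In i l -> Q i x.
Proof.
  intros HP0 HPjoin Hl Hr l; induction l as [|i0 l IH]; intros H.
  - exists x0; split; [exact HP0 | intros i []].
  - destruct (H i0 (or_introl eq_refl)) as [y [HPy Hy]].
    destruct IH as [x [HPx Hx]]; [intros i Hi; apply H; right; exact Hi|].
    exists (join x y); split; [now apply HPjoin|].
    intros i [<-|Hi]; [apply Hr | apply Hl, Hx]; assumption.
Qed.

Lemma In_seq0 n i : In i (seq 0 n) <-> (i < n)%nat.
Proof. rewrite in_seq; lia. Qed.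

Lemma Un_cv_dist_le u l c b N :
  Un_cv u l -> (forall K, (N <= K)%nat -> Rabs (u K - c) <= b) -> Rabs (l - c) <= b.
Proof.
  intros Hu Hb; apply Rnot_lt_le; intros Hlt.
  destruct (Hu (Rabs (l - c) - b)) as [N0 HN0]; [lra|].
  specialize (HN0 (Nat.max N N0) ltac:(lia)); specialize (Hb (Nat.max N N0) ltac:(lia)).
  unfold R_dist in HN0; rewrite Rabs_minus_sym in HN0.
  pose proof (Rabs_triang (l - u (Nat.max N N0)) (u (Nat.max N N0) - c)) as Htri.
  replace (l - u (Nat.max N N0) + (u (Nat.max N N0) - c)) with (l - c) in Htri by ring.
  lra.
Qed.

Lemma Csums_terms_bounded u l : Csums u l -> exists B, forall k, Cnorm (u k) <= B.
Proof.
  intros [Hre Him].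
  destruct (maj_by_pos _ (exist _ _ Hre)) as [B1 [_ HB1]].
  destruct (maj_by_pos _ (exist _ _ Him)) as [B2 [_ HB2]].
  exists (2 * B1 + 2 * B2); intros k.
  eapply Rle_trans; [apply Cnorm_le_re_im|].
  replace (fst (u k)) with (fst (Csum u (S k)) - fst (Csum u k)) by (simpl; ring).
  replace (snd (u k)) with (snd (Csum u (S k)) - snd (Csum u k)) by (simpl; ring).
  pose proof (Rabs_triang (fst (Csum u (S k))) (- fst (Csum u k))).
  pose proof (Rabs_triang (snd (Csum u (S k))) (- snd (Csum u k))).
  rewrite Rabs_Ropp in *.
  pose proof (HB1 k); pose proof (HB1 (S k)); pose proof (HB2 k); pose proof (HB2 (S k)).
  unfold Rminus; lra.
Qed.

Lemma Csums_sub_partial_le u l N b :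
  Csums u l -> (forall K, (N <= K)%nat -> Cnorm (Csub (Csum u K) (Csum u N)) <= b) ->
  Cnorm (Csub l (Csum u N)) <= 2 * b.
Proof.
  intros [Hre Him] Hb.
  assert (Hfst : Rabs (fst l - fst (Csum u N)) <= b).
  { apply (Un_cv_dist_le _ _ _ _ N Hre); intros K HK.
    eapply Rle_trans; [|exact (Hb K HK)]; apply (Rabs_fst_le_Cnorm (Csub _ _)). }
  assert (Hsnd : Rabs (snd l - snd (Csum u N)) <= b).
  { apply (Un_cv_dist_le _ _ _ _ N Him); intros K HK.
    eapply Rle_trans; [|exact (Hb K HK)]; apply (Rabs_snd_le_Cnorm (Csub _ _)). }
  eapply Rle_trans; [apply Cnorm_le_re_im|]; simpl; lra.
Qed.

Lemma Csum_geometric_tail u B q N K :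
  0 <= q <= 1/2 -> (forall k, Cnorm (u k) <= B * q ^ k) -> (N <= K)%nat ->
  Cnorm (Csub (Csum u K) (Csum u N)) <= 2 * B * q ^ N.
Proof.
  intros Hq Hu HNK.
  assert (HB : 0 <= B) by (pose proof (Hu 0%nat) as H0; simpl in H0; pose proof (Cnorm_ge0 (u 0%nat)); lra).
  assert (Hj : forall j, Cnorm (Csub (Csum u (N + j)%nat) (Csum u N)) <= 2 * B * (q ^ N - q ^ (N + j))).
  { induction j as [|j IH].
    - rewrite Nat.add_0_r, Cnorm_sub_diag; lra.
    - rewrite Nat.add_succ_r; simpl Csum.
      replace (Csub (Cadd (Csum u (N + j)%nat) (u (N + j)%nat)) (Csum u N))
        with (Cadd (Csub (Csum u (N + j)%nat) (Csum u N)) (u (N + j)%nat))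
        by (unfold Cadd, Csub; simpl; f_equal; ring).
      eapply Rle_trans; [apply Cnorm_add_le|].
      pose proof (Hu (N + j)%nat); pose proof (pow_le q (N + j) (proj1 Hq)).
      simpl pow; assert (0 <= (1/2 - q) * (B * q ^ (N + j))) by (apply Rmult_le_pos; nra).
      nra. }
  replace K with (N + (K - N))%nat by lia.
  eapply Rle_trans; [apply Hj|].
  pose proof (pow_le q (N + (K - N)) (proj1 Hq)); nra.
Qed.

Lemma ps_eval_spec f z : (exists l, Csums (ps_terms f z) l) -> Csums (ps_terms f z) (ps_eval f z).
Proof. intros Hex; exact (epsilon_spec (inhabits C0) _ Hex). Qed.

(* Convergence at a real point t bounds the coefficients by B / t^k; comparing with a
   geometric series of ratio |z| / t <= 1/2 then bounds the tail after N terms. *)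
Lemma pos_radius_trunc_error f : pos_radius f ->
  exists rho, 0 < rho /\ forall N, exists C, 0 <= C /\
    forall z, Cnorm z < rho -> Cnorm (Csub (ps_eval f z) (trunc_eval f N z)) <= C * Cnorm z ^ N.
Proof.
  intros [r0 [Hr0 Hconv]].
  set (t := r0 / 2); assert (Ht : 0 < t) by (unfold t; lra).
  assert (Hnt : Cnorm (t, 0) = t) by (rewrite Cnorm_real; apply Rabs_pos_eq; lra).
  destruct (Hconv (t, 0)) as [l Hl]; [rewrite Hnt; unfold t; lra|].
  destruct (Csums_terms_bounded _ _ Hl) as [B HB].
  exists (t / 2); split; [lra|]; intros N.
  assert (HB0 : 0 <= B) by (pose proof (Cnorm_ge0 (ps_terms f (t, 0) 0%nat)); pose proof (HB 0%nat); lra).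
  exists (4 * B * (/ t) ^ N); split.
  { pose proof (pow_le (/ t) N (Rlt_le _ _ (Rinv_0_lt_compat _ Ht))); nra. }
  intros z Hz; set (q := Cnorm z / t).
  assert (Hq : 0 <= q <= 1/2).
  { unfold q; pose proof (Cnorm_ge0 z); split.
    - apply Rmult_le_pos; [lra|apply Rlt_le, Rinv_0_lt_compat; lra].
    - apply Rmult_le_reg_r with t; [lra|]; unfold Rdiv; rewrite Rmult_assoc, Rinv_l; lra. }
  assert (Hterm : forall k, Cnorm (ps_terms f z k) <= B * q ^ k).
  { intros k; specialize (HB k); unfold ps_terms in *.
    rewrite Cnorm_mul, Cnorm_pow in *; rewrite Hnt in HB.
    replace (Cnorm z) with (q * t) by (unfold q; field; lra).
    rewrite Rpow_mult_distr; pose proof (pow_le q k (proj1 Hq)); nra. }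
  eapply Rle_trans.
  - apply (Csums_sub_partial_le _ _ N (2 * B * q ^ N)).
    + apply ps_eval_spec, Hconv; unfold t in Hz; lra.
    + intros K HK; exact (Csum_geometric_tail _ _ _ _ _ Hq Hterm HK).
  - right; unfold q, Rdiv; rewrite Rpow_mult_distr, pow_inv; ring.
Qed.

Lemma trunc_eval_ext f g N z :
  (forall k, (k < N)%nat -> f k = g k) -> trunc_eval f N z = trunc_eval g N z.
Proof.
  intros Hfg; unfold trunc_eval; induction N as [|N IH]; simpl; [reflexivity|].
  rewrite IH by (intros; apply Hfg; lia); unfold ps_terms; rewrite Hfg by lia; reflexivity.
Qed.

Lemma pow_le_pow_of_le_1 x m n : 0 <= x <= 1 -> (m <= n)%nat -> x ^ n <= x ^ m.
Proof.
  intros Hx Hmn; replace n with (m + (n - m))%nat by lia; rewrite pow_add.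
  pose proof (pow_le x m (proj1 Hx)); pose proof (pow_incr x 1 (n - m) Hx).
  rewrite pow1 in *; nra.
Qed.

Lemma trunc_eval_sub_le f p N z A :
  (p <= N)%nat -> Cnorm z <= 1 -> (forall k, (p <= k < N)%nat -> Cnorm (f k) <= A) ->
  Cnorm (Csub (trunc_eval f N z) (trunc_eval f p z)) <= INR (N - p) * A * Cnorm z ^ p.
Proof.
  intros HpN Hz HA; unfold trunc_eval; induction N as [|N IH].
  - replace p with 0%nat by lia; rewrite Cnorm_sub_diag; simpl; lra.
  - destruct (Nat.eq_dec p (S N)) as [->|Hp].
    + rewrite Cnorm_sub_diag, Nat.sub_diag; simpl; lra.
    + simpl Csum.
      replace (Csub (Cadd (Csum (ps_terms f z) N) (ps_terms f z N)) (Csum (ps_terms f z) p))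
        with (Cadd (Csub (Csum (ps_terms f z) N) (Csum (ps_terms f z) p)) (ps_terms f z N))
        by (unfold Cadd, Csub; simpl; f_equal; ring).
      eapply Rle_trans; [apply Cnorm_add_le|].
      assert (Hterm : Cnorm (ps_terms f z N) <= A * Cnorm z ^ p).
      { unfold ps_terms; rewrite Cnorm_mul, Cnorm_pow.
        pose proof (Cnorm_ge0 z); pose proof (Cnorm_ge0 (f N)); pose proof (HA N ltac:(lia)).
        pose proof (pow_le (Cnorm z) N ltac:(lra)).
        pose proof (pow_le_pow_of_le_1 (Cnorm z) p N ltac:(lra) ltac:(lia)); nra. }
      replace (S N - p)%nat with (S (N - p)) by lia; rewrite S_INR.
      pose proof (IH ltac:(lia) ltac:(intros; apply HA; lia)); nra.
Qed.

Lemma trunc_eval_succ_sub f g m z : (forall k, (k < m)%nat -> f k = g k) ->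
  Cnorm (Csub (trunc_eval f (S m) z) (trunc_eval g (S m) z)) = Cnorm (Csub (f m) (g m)) * Cnorm z ^ m.
Proof.
  intros Hfg; pose proof (trunc_eval_ext f g m z Hfg) as Hlow.
  unfold trunc_eval in *; simpl Csum; rewrite Hlow.
  rewrite <- Cnorm_pow, <- Cnorm_mul; unfold ps_terms; f_equal.
  unfold Cadd, Csub, Cmul; simpl; f_equal; ring.
Qed.

Lemma agree_or_first_disagreement (f g : pseries) n :
  (forall k, (k < n)%nat -> f k = g k) \/
  exists m, (m < n)%nat /\ f m <> g m /\ forall k, (k < m)%nat -> f k = g k.
Proof.
  destruct (classic (forall k, (k < n)%nat -> f k = g k)) as [Hall|Hnot]; [now left|right].
  apply not_all_ex_not in Hnot as [k Hk]; apply imply_to_and in Hk as [Hkn Hne].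
  induction k as [k IH] using Wf_nat.lt_wf_ind.
  destruct (classic (forall j, (j < k)%nat -> f j = g j)) as [Hbelow|Hbelow].
  - now exists k.
  - apply not_all_ex_not in Hbelow as [j Hj]; apply imply_to_and in Hj as [Hjk Hj].
    apply (IH j); lia || assumption.
Qed.

Section CalI.
Variables (d : nat) (a : nat -> pseries).

Lemma calI_agree I n i i' :
  in_calI d a I n -> I i -> I i' -> forall k, (k < n)%nat -> a i k = a i' k.
Proof.
  intros [_ [_ [_ [Hclose _]]]] Hi Hi' k Hk.
  destruct (Nat.eq_dec i i') as [->|Hne]; [reflexivity|].
  apply Csub_eq_C0, (Hclose i i'); assumption.
Qed.

(* Maximality of I makes it the whole agreement class modulo x^n. *)
Lemma calI_closed I n i j :
  in_calI d a I n -> I i -> (j < d)%nat -> (forall k, (k < n)%nat -> a j k = a i k) -> I j.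
Proof.
  intros HI Hi Hj Hji; pose proof HI as [Hlt [Htwo [_ [_ Hmax]]]].
  apply (Hmax (fun x => I x \/ x = j)); [| | | |now right].
  - intros x [Hx| ->]; auto.
  - destruct Htwo as [x [y [Hx [Hy Hxy]]]]; exists x, y; auto.
  - assert (Hagree : forall x, I x \/ x = j -> forall k, (k < n)%nat -> a x k = a i k).
    { intros x [Hx| ->] k Hk; [apply (calI_agree I n); assumption | apply Hji; assumption]. }
    intros x y Hx Hy _ k Hk; apply Csub_eq_C0.
    rewrite (Hagree x Hx k Hk), (Hagree y Hy k Hk); reflexivity.
  - now left.
Qed.

Lemma calI_ext I I' n i i' :
  in_calI d a I n -> in_calI d a I' n -> I i -> I' i' ->
  (forall k, (k < n)%nat -> a i k = a i' k) -> forall x, I x <-> I' x.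
Proof.
  intros HI HI' Hi Hi' Hii' x; split; intros Hx.
  - apply (calI_closed I' n i'); [assumption | assumption | now apply HI |].
    intros k Hk; rewrite (calI_agree I n x i HI Hx Hi k Hk); auto.
  - apply (calI_closed I n i); [assumption | assumption | now apply HI' |].
    intros k Hk; rewrite (calI_agree I' n x i' HI' Hx Hi' k Hk), Hii'; auto.
Qed.

Lemma calI_level_le M I n :
  (forall i j, (i < d)%nat -> (j < d)%nat -> i <> j -> exists k, (k < M)%nat /\ a i k <> a j k) ->
  in_calI d a I n -> (n <= M)%nat.
Proof.
  intros HM HI; pose proof HI as [Hlt [[i [j [Hi [Hj Hij]]]] _]].
  destruct (HM i j (Hlt i Hi) (Hlt j Hj) Hij) as [k [Hk Hne]].
  destruct (Nat.le_gt_cases n M) as [Hle|Hgt]; [exact Hle|].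
  exfalso; apply Hne, (calI_agree I n); [assumption..|lia].
Qed.

End CalI.

Section Geometry.
Variables (d : nat) (a : nat -> pseries) (M : nat) (delta E eta r : R) (z0 : Cplx).
Hypothesis sep_index : forall i j, (i < d)%nat -> (j < d)%nat -> i <> j ->
  exists k, (k < M)%nat /\ a i k <> a j k.
Hypothesis coef_gap : forall i j k, (i < d)%nat -> (j < d)%nat -> (k < M)%nat ->
  a i k <> a j k -> delta <= Cnorm (Csub (a i k) (a j k)).
Hypothesis trunc_step : forall i p N, (i < d)%nat -> (p <= N)%nat -> (N <= M)%nat ->
  Cnorm (Csub (trunc_eval (a i) N z0) (trunc_eval (a i) p z0)) <= E * Cnorm z0 ^ p.
Hypothesis trunc_error : forall i p, (i < d)%nat -> (p <= M)%nat ->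
  Cnorm (Csub (ps_eval (a i) z0) (trunc_eval (a i) p z0)) <= E * Cnorm z0 ^ p.
Hypothesis E_ge0 : 0 <= E.
Hypothesis eta_pos : 0 < eta.
Hypothesis eta_small : 4 * eta < delta * (/ 2) ^ M.
Hypothesis r_pos : 0 < r.
Hypothesis r_le_quarter : r <= 1/4.
Hypothesis Er_le_eta : 2 * E * r <= eta.
Hypothesis Er_le_delta : 4 * E * r <= delta.
Hypothesis z0_annulus : r / 2 < Cnorm z0 < r.

Lemma z0_pow_lower m N : (m < N)%nat -> (N <= M)%nat -> r ^ (N - 1) * (/ 2) ^ M <= Cnorm z0 ^ m.
Proof.
  intros HmN HNM.
  assert (Hr : r ^ (N - 1) <= r ^ m) by (apply pow_le_pow_of_le_1; [lra|lia]).
  assert (Hh : (/ 2) ^ M <= (/ 2) ^ m) by (apply pow_le_pow_of_le_1; [lra|lia]).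
  assert (Hz : (r * / 2) ^ m <= Cnorm z0 ^ m) by (apply pow_incr; lra).
  rewrite Rpow_mult_distr in Hz.
  pose proof (pow_le r (N - 1) (Rlt_le _ _ r_pos)); pose proof (pow_le (/ 2) M ltac:(lra)).
  apply (Rle_trans _ (r ^ m * (/ 2) ^ m)); [apply Rmult_le_compat|]; assumption.
Qed.

Lemma error_le_radius p : (1 <= p)%nat -> E * Cnorm z0 ^ p <= eta / 2 * r ^ (p - 1).
Proof.
  intros Hp; replace p with (S (p - 1)) at 1 by lia; simpl pow.
  pose proof (Cnorm_ge0 z0).
  assert (Hz : Cnorm z0 ^ (p - 1) <= r ^ (p - 1)) by (apply pow_incr; lra).
  pose proof (pow_le (Cnorm z0) (p - 1) ltac:(lra)).
  assert (Cnorm z0 * Cnorm z0 ^ (p - 1) <= r * r ^ (p - 1)) by (apply Rmult_le_compat; lra).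
  pose proof (pow_le r (p - 1) ltac:(lra)).
  apply (Rle_trans _ (E * (r * r ^ (p - 1)))); [apply Rmult_le_compat_l; assumption|].
  rewrite <- Rmult_assoc; apply Rmult_le_compat_r; lra.
Qed.

(* The degree-m terms differ by at least delta |z0|^m, which dominates the errors E |z0|^(m+1). *)
Lemma first_disagreement_separates i j m N u v :
  (i < d)%nat -> (j < d)%nat -> (m < N)%nat -> (N <= M)%nat ->
  (forall k, (k < m)%nat -> a i k = a j k) -> a i m <> a j m ->
  Cnorm (Csub u (trunc_eval (a i) (S m) z0)) <= E * Cnorm z0 ^ S m ->
  Cnorm (Csub v (trunc_eval (a j) (S m) z0)) <= E * Cnorm z0 ^ S m ->
  2 * eta * r ^ (N - 1) < Cnorm (Csub u v).
Proof.
  intros Hi Hj HmN HNM Hagree Hne Hu Hv.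
  assert (Hgap : delta * Cnorm z0 ^ m <=
                 Cnorm (Csub (trunc_eval (a i) (S m) z0) (trunc_eval (a j) (S m) z0))).
  { rewrite trunc_eval_succ_sub by exact Hagree.
    apply Rmult_le_compat_r; [apply pow_le, Cnorm_ge0 | apply coef_gap; auto; lia]. }
  pose proof (Cnorm_sub_triangle (trunc_eval (a i) (S m) z0) u (trunc_eval (a j) (S m) z0)).
  pose proof (Cnorm_sub_triangle u v (trunc_eval (a j) (S m) z0)).
  rewrite Cnorm_sub_sym in Hu.
  assert (Herr : E * Cnorm z0 ^ S m <= delta / 4 * Cnorm z0 ^ m).
  { simpl pow; pose proof (pow_le (Cnorm z0) m (Cnorm_ge0 z0)).
    assert (E * Cnorm z0 <= E * r) by (apply Rmult_le_compat_l; lra).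
    assert (0 <= (delta / 4 - E * Cnorm z0) * Cnorm z0 ^ m) by (apply Rmult_le_pos; lra).
    nra. }
  pose proof (z0_pow_lower m N HmN HNM).
  pose proof (pow_lt r (N - 1) r_pos).
  assert (delta / 2 * (r ^ (N - 1) * (/ 2) ^ M) <= delta / 2 * Cnorm z0 ^ m)
    by (apply Rmult_le_compat_l; nra).
  nra.
Qed.

Lemma circles_disjoint I n I' n' i i' z :
  in_calI d a I n -> in_calI d a I' n' -> ~ same_pair I n I' n' -> (n <= n')%nat ->
  I i -> I' i' ->
  Cnorm (Csub z (trunc_eval (a i) n z0)) = r ^ (n - 1) * eta ->
  Cnorm (Csub z (trunc_eval (a i') n' z0)) = r ^ (n' - 1) * eta -> False.
Proof.
  intros HI HI' Hdiff Hnn' Hi Hi' Hz Hz'.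
  pose proof (calI_level_le d a M I' n' sep_index HI').
  pose proof HI as [Hlt [_ [Hn _]]]; pose proof (Hlt i Hi); pose proof (proj1 HI' i' Hi').
  set (w := trunc_eval (a i) n z0) in *; set (w' := trunc_eval (a i') n' z0) in *.
  pose proof (pow_lt r (n - 1) r_pos).
  assert (Hrr : r ^ (n' - 1) <= r ^ (n - 1)) by (apply pow_le_pow_of_le_1; [lra|lia]).
  destruct (agree_or_first_disagreement (a i) (a i') n) as [Hagree|[m [Hmn [Hne Hagree]]]].
  - destruct (Nat.eq_dec n n') as [<-|Hlt'].
    { apply Hdiff; split; [reflexivity|]; exact (calI_ext d a I I' n i i' HI HI' Hi Hi' Hagree). }
    (* the circle of (I', n') lies well inside the disk of (I, n) *)
    assert (Hsmall : r ^ (n' - 1) <= r * r ^ (n - 1)).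
    { change (r * r ^ (n - 1)) with (r ^ S (n - 1)); apply pow_le_pow_of_le_1; [lra|lia]. }
    assert (Hcenter : Cnorm (Csub w' w) <= eta / 2 * r ^ (n - 1)).
    { unfold w; rewrite (trunc_eval_ext (a i) (a i') n z0 Hagree).
      eapply Rle_trans; [apply trunc_step; auto; lia|apply error_le_radius; lia]. }
    pose proof (Cnorm_sub_triangle z w' w).
    assert (r * r ^ (n - 1) * eta <= 1 / 4 * r ^ (n - 1) * eta) by
      (apply Rmult_le_compat_r; [lra|apply Rmult_le_compat_r; lra]).
    assert (r ^ (n' - 1) * eta <= r * r ^ (n - 1) * eta) by (apply Rmult_le_compat_r; lra).
    nra.
  - assert (Hsep : 2 * eta * r ^ (n - 1) < Cnorm (Csub w w')).
    { apply (first_disagreement_separates i i' m n); try assumption; try lia;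
        apply trunc_step; assumption || lia. }
    pose proof (Cnorm_sub_triangle w z w'); rewrite (Cnorm_sub_sym w z) in *.
    assert (r ^ (n' - 1) * eta <= r ^ (n - 1) * eta) by (apply Rmult_le_compat_r; lra).
    nra.
Qed.

Lemma value_in_disk I n i i' : in_calI d a I n -> I i -> I i' ->
  Cnorm (Csub (ps_eval (a i') z0) (trunc_eval (a i) n z0)) < r ^ (n - 1) * eta.
Proof.
  intros HI Hi Hi'; pose proof HI as [Hlt [_ [Hn _]]].
  rewrite (trunc_eval_ext (a i) (a i') n z0 (calI_agree d a I n i i' HI Hi Hi')).
  eapply Rle_lt_trans.
  - apply trunc_error; [auto | exact (calI_level_le d a M I n sep_index HI)].
  - eapply Rle_lt_trans; [apply error_le_radius; exact Hn|].
    pose proof (pow_lt r (n - 1) r_pos); nra.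
Qed.

Lemma value_outside_disk I n i j : in_calI d a I n -> I i -> (j < d)%nat -> ~ I j ->
  r ^ (n - 1) * eta < Cnorm (Csub (ps_eval (a j) z0) (trunc_eval (a i) n z0)).
Proof.
  intros HI Hi Hj HnI; pose proof (calI_level_le d a M I n sep_index HI).
  pose proof (proj1 HI i Hi); pose proof (pow_lt r (n - 1) r_pos).
  destruct (agree_or_first_disagreement (a j) (a i) n) as [Hagree|[m [Hmn [Hne Hagree]]]].
  - exfalso; exact (HnI (calI_closed d a I n i j HI Hi Hj Hagree)).
  - assert (2 * eta * r ^ (n - 1) <
            Cnorm (Csub (ps_eval (a j) z0) (trunc_eval (a i) n z0))); [|nra].
    apply (first_disagreement_separates j i m n); try assumption; try lia.
    + apply trunc_error; [assumption | lia].
    + apply trunc_step; [assumption | lia | assumption].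
Qed.

Lemma circles_and_values :
  (forall I n I' n', in_calI d a I n -> in_calI d a I' n' -> ~ same_pair I n I' n' ->
     forall i i', I i -> I' i' ->
     ~ (exists z : Cplx,
          Cnorm (Csub z (trunc_eval (a i) n z0)) = r ^ (n - 1) * eta /\
          Cnorm (Csub z (trunc_eval (a i') n' z0)) = r ^ (n' - 1) * eta)) /\
  (forall I n, in_calI d a I n ->
     forall i, I i ->
     (forall i', I i' ->
        Cnorm (Csub (ps_eval (a i') z0) (trunc_eval (a i) n z0)) < r ^ (n - 1) * eta) /\
     (forall j, (j < d)%nat -> ~ I j ->
        ~ (Cnorm (Csub (ps_eval (a j) z0) (trunc_eval (a i) n z0)) < r ^ (n - 1) * eta \/
           Cnorm (Csub (ps_eval (a j) z0) (trunc_eval (a i) n z0)) = r ^ (n - 1) * eta))).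
Proof.
  split.
  - intros I n I' n' HI HI' Hdiff i i' Hi Hi' [z [Hz Hz']].
    destruct (Nat.le_ge_cases n n') as [Hle|Hge].
    + exact (circles_disjoint I n I' n' i i' z HI HI' Hdiff Hle Hi Hi' Hz Hz').
    + refine (circles_disjoint I' n' I n i' i z HI' HI _ Hge Hi' Hi Hz' Hz).
      intros [Hnn Hsame]; apply Hdiff; split; [auto | intros x; symmetry; apply Hsame].
  - intros I n HI i Hi; split.
    + intros i' Hi'; exact (value_in_disk I n i i' HI Hi Hi').
    + intros j Hj HnI; pose proof (value_outside_disk I n i j HI Hi Hj HnI); lra.
Qed.

End Geometry.

Section Constants.
Variables (d : nat) (a : nat -> pseries).

Lemma In_pairs i j : (i < d)%nat -> (j < d)%nat -> In (i, j) (list_prod (seq 0 d) (seq 0 d)).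
Proof. intros Hi Hj; apply in_prod_iff; rewrite !In_seq0; auto. Qed.

Lemma exists_separation_index :
  (forall i j, (i < d)%nat -> (j < d)%nat -> i <> j -> exists k, a i k <> a j k) ->
  exists M, forall i j, (i < d)%nat -> (j < d)%nat -> i <> j ->
    exists k, (k < M)%nat /\ a i k <> a j k.
Proof.
  intros hdist.
  destruct (finite_join_witness Nat.max 0%nat (fun _ => True)
    (fun (p : nat * nat) M => fst p <> snd p -> exists k, (k < M)%nat /\ a (fst p) k <> a (snd p) k)
    I (fun _ _ _ _ => I)) with (l := list_prod (seq 0 d) (seq 0 d)) as [M [_ HM]].
  - intros p x y H Hne; destruct (H Hne) as [k [Hk Hak]]; exists k; split; [lia | exact Hak].
  - intros p x y H Hne; destruct (H Hne) as [k [Hk Hak]]; exists k; split; [lia | exact Hak].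
  - intros [i j] Hin; apply in_prod_iff in Hin as [Hi Hj]; rewrite !In_seq0 in *; simpl.
    destruct (Nat.eq_dec i j) as [->|Hij]; [exists 0%nat; tauto|].
    destruct (hdist i j Hi Hj Hij) as [k Hk].
    exists (S k); split; [exact I|]; intros _; exists k; split; [lia | exact Hk].
  - exists M; intros i j Hi Hj; apply (HM (i, j)), In_pairs; assumption.
Qed.

Lemma exists_coef_bound M :
  exists A, 0 <= A /\ forall i k, (i < d)%nat -> (k < M)%nat -> Cnorm (a i k) <= A.
Proof.
  destruct (finite_join_witness Rmax 0 (fun A => 0 <= A)
    (fun (p : nat * nat) A => Cnorm (a (fst p) (snd p)) <= A)) with
    (l := list_prod (seq 0 d) (seq 0 M)) as [A [HA0 HA]].
  - lra.
  - intros x y Hx _; apply (Rle_trans _ x); [exact Hx | apply Rmax_l].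
  - intros p x y H; apply (Rle_trans _ x); [exact H | apply Rmax_l].
  - intros p x y H; apply (Rle_trans _ y); [exact H | apply Rmax_r].
  - intros p _; exists (Cnorm (a (fst p) (snd p))); split; [apply Cnorm_ge0 | lra].
  - exists A; split; [exact HA0|]; intros i k Hi Hk.
    apply (HA (i, k)), in_prod_iff; rewrite !In_seq0; auto.
Qed.

Lemma exists_coef_gap M :
  exists delta, 0 < delta /\ forall i j k, (i < d)%nat -> (j < d)%nat -> (k < M)%nat ->
    a i k <> a j k -> delta <= Cnorm (Csub (a i k) (a j k)).
Proof.
  destruct (finite_join_witness Rmin 1 (fun delta => 0 < delta)
    (fun (p : nat * nat * nat) delta => let '(i, j, k) := p in
       a i k <> a j k -> delta <= Cnorm (Csub (a i k) (a j k))))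
    with (l := list_prod (list_prod (seq 0 d) (seq 0 d)) (seq 0 M)) as [delta [Hpos Hgap]].
  - lra.
  - intros x y; apply Rmin_glb_lt.
  - intros [[i j] k] x y H Hne; apply (Rle_trans _ x); [apply Rmin_l | exact (H Hne)].
  - intros [[i j] k] x y H Hne; apply (Rle_trans _ y); [apply Rmin_r | exact (H Hne)].
  - intros [[i j] k] _.
    destruct (classic (a i k = a j k)) as [Heq|Hne].
    + exists 1; split; [lra | intros Hne; contradiction].
    + exists (Cnorm (Csub (a i k) (a j k))); split; [now apply Cnorm_sub_gt0 | intros _; lra].
  - exists delta; split; [exact Hpos|]; intros i j k Hi Hj Hk.
    apply (Hgap (i, j, k)), in_prod_iff; split; [apply In_pairs | apply In_seq0]; assumption.
Qed.

Lemma exists_uniform_trunc_error M :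
  (forall i, (i < d)%nat -> pos_radius (a i)) ->
  exists rho C, 0 < rho /\ 0 <= C /\ forall i N z, (i < d)%nat -> (N <= M)%nat -> Cnorm z < rho ->
    Cnorm (Csub (ps_eval (a i) z) (trunc_eval (a i) N z)) <= C * Cnorm z ^ N.
Proof.
  intros hconv.
  destruct (finite_join_witness (fun p q => (Rmin (fst p) (fst q), Rmax (snd p) (snd q))) (1, 0)
    (fun p => 0 < fst p /\ 0 <= snd p)
    (fun (iN : nat * nat) p => forall z, Cnorm z < fst p ->
       Cnorm (Csub (ps_eval (a (fst iN)) z) (trunc_eval (a (fst iN)) (snd iN) z)) <= snd p * Cnorm z ^ snd iN))
    with (l := list_prod (seq 0 d) (seq 0 (S M))) as [[rho C] [[Hrho HC] Hbound]].
  - simpl; lra.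
  - intros x y [Hx1 Hx2] [Hy1 Hy2]; simpl; split; [now apply Rmin_glb_lt|].
    apply (Rle_trans _ _ _ Hx2), Rmax_l.
  - intros iN x y H z Hz; simpl in Hz.
    eapply Rle_trans; [apply H, (Rlt_le_trans _ _ _ Hz), Rmin_l|].
    apply Rmult_le_compat_r; [apply pow_le, Cnorm_ge0 | apply Rmax_l].
  - intros iN x y H z Hz; simpl in Hz.
    eapply Rle_trans; [apply H, (Rlt_le_trans _ _ _ Hz), Rmin_r|].
    apply Rmult_le_compat_r; [apply pow_le, Cnorm_ge0 | apply Rmax_r].
  - intros [i N] Hin; apply in_prod_iff in Hin as [Hi _]; rewrite In_seq0 in Hi.
    destruct (pos_radius_trunc_error _ (hconv i Hi)) as [rho [Hrho HN]].
    destruct (HN N) as [C [HC Hbound]]; exists (rho, C); auto.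
  - exists rho, C; split; [exact Hrho|]; split; [exact HC|]; intros i N z Hi HN.
    apply (Hbound (i, N)), in_prod_iff; rewrite !In_seq0; split; lia.
Qed.

End Constants.

Lemma exists_small_radius rho E eta delta :
  0 < rho -> 0 <= E -> 0 < eta -> 0 < delta ->
  exists r, 0 < r /\ r <= rho /\ r <= 1/4 /\ 2 * E * r <= eta /\ 4 * E * r <= delta.
Proof.
  intros Hrho HE Heta Hdelta.
  set (m := Rmin eta delta).
  assert (Hm : 0 < m) by (apply Rmin_glb_lt; assumption).
  exists (Rmin (Rmin rho (1/4)) (m / (4 * E + 1))).
  assert (H4E : 4 * E * (m / (4 * E + 1)) <= m).
  { apply (Rmult_le_reg_r (4 * E + 1)); [lra|].
    replace (4 * E * (m / (4 * E + 1)) * (4 * E + 1)) with (4 * E * m) by (field; lra); nra. }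
  pose proof (Rmin_l (Rmin rho (1/4)) (m / (4 * E + 1))) as H1.
  pose proof (Rmin_r (Rmin rho (1/4)) (m / (4 * E + 1))) as H2.
  pose proof (Rmin_l rho (1/4)); pose proof (Rmin_r rho (1/4)).
  assert (m <= eta) by apply Rmin_l; assert (m <= delta) by apply Rmin_r.
  assert (4 * E * Rmin (Rmin rho (1/4)) (m / (4 * E + 1)) <= 4 * E * (m / (4 * E + 1)))
    by (apply Rmult_le_compat_l; lra).
  repeat split; try lra.
  repeat apply Rmin_glb_lt; try lra; apply Rdiv_lt_0_compat; lra.
Qed.
Theorem mainTheorem3 (d : nat) (a : nat -> pseries)
  (hd : (2 <= d)%nat)
  (hdist : forall i j, (i < d)%nat -> (j < d)%nat -> i <> j -> exists k, a i k <> a j k)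
  (hconv : forall i, (i < d)%nat -> pos_radius (a i)) :
  exists eta0, 0 < eta0 /\
  forall eta, 0 < eta < eta0 ->
  exists r, 0 < r /\
  forall z0 : Cplx, r / 2 < Cnorm z0 < r ->
    (forall I n I' n', in_calI d a I n -> in_calI d a I' n' -> ~ same_pair I n I' n' ->
       forall i i', I i -> I' i' ->
       ~ (exists z : Cplx,
            Cnorm (Csub z (trunc_eval (a i) n z0)) = r ^ (n - 1) * eta /\
            Cnorm (Csub z (trunc_eval (a i') n' z0)) = r ^ (n' - 1) * eta)) /\
    (forall I n, in_calI d a I n ->
       forall i, I i ->
       (forall i', I i' ->
          Cnorm (Csub (ps_eval (a i') z0) (trunc_eval (a i) n z0)) < r ^ (n - 1) * eta) /\
       (forall j, (j < d)%nat -> ~ I j ->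
          ~ (Cnorm (Csub (ps_eval (a j) z0) (trunc_eval (a i) n z0)) < r ^ (n - 1) * eta \/
             Cnorm (Csub (ps_eval (a j) z0) (trunc_eval (a i) n z0)) = r ^ (n - 1) * eta))).
Proof.
  destruct (exists_separation_index d a hdist) as [M HM].
  destruct (exists_coef_bound d a M) as [A [HA0 HA]].
  destruct (exists_coef_gap d a M) as [delta [Hdelta Hgap]].
  destruct (exists_uniform_trunc_error d a M hconv) as [rho [C [Hrho [HC Herr]]]].
  set (E := C + INR M * A).
  assert (HE : 0 <= E) by (pose proof (pos_INR M); unfold E; nra).
  exists (delta * (/ 2) ^ M / 4); split; [pose proof (pow_lt (/ 2) M ltac:(lra)); nra|].
  intros eta [Heta Heta0].
  destruct (exists_small_radius rho E eta delta) as [r [Hr [Hrrho [Hr4 [HEeta HEdelta]]]]];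
    try assumption.
  exists r; split; [exact Hr|]; intros z0 Hz0.
  assert (Hz0r : Cnorm z0 <= 1) by lra.
  apply (circles_and_values d a M delta E eta r z0); try assumption; try lra.
  - intros i p N Hi HpN HNM.
    eapply Rle_trans; [apply (trunc_eval_sub_le _ _ _ _ A); auto; intros; apply HA; lia|].
    assert (INR (N - p) * A <= INR M * A) by (apply Rmult_le_compat_r, le_INR; [|lia]; assumption).
    pose proof (pow_le _ p (Cnorm_ge0 z0)); unfold E; nra.
  - intros i p Hi Hp.
    eapply Rle_trans; [apply Herr; auto; lra|].
    assert (0 <= INR M * A) by (apply Rmult_le_pos; [apply pos_INR | assumption]).
    pose proof (pow_le _ p (Cnorm_ge0 z0)); unfold E; nra.
Qed.
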